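(* For every \textsc{Set Once Strip Cover} instance $(x,b)$, the \textsc{RoundRobin} algorithm produces a valid schedule with lifetime $\mathrm{RR}(x,b)=\sum_{i=1}^n b_i/r_i$, where $r_i=\max\{x_i,1-x_i\}$, and $\mathrm{RR}(x,b)\ge \frac{2}{3}\,\mathrm{Opt}(x,b)$, where $\mathrm{Opt}(x,b)$ is the optimal lifetime of $(x,b)$. That is, \textsc{RoundRobin} is a $\frac{3}{2}$-approximation algorithm for \textsc{Set Once Strip Cover}.
   Context: \textsc{Set Once Strip Cover}: An instance is a pair $(x,b)$, where $x=(x_1,\ldots,x_n)\in[0,1]^n$ with $x_1\le\cdots\le x_n$ are sensor locations and $b=(b_1,\ldots,b_n)$, $b_i\ge 0$ rational, are battery charges. A schedule is a pair $(\rho,\tau)$ with $\rho\in[0,1]^n$ (radii) and $\tau\in[0,\infty)^n$ (activation times), each set once. Sensor $i$ covers the interval $[x_i-\rho_i,x_i+\rho_i]$ during the time interval $[\tau_i,\tau_i+b_i/\rho_i]$ and nothing otherwise (a sensor with $\rho_i=0$ covers nothing). A point $(u,t)$ is covered if $u\in[x_i-\rho_i,x_i+\rho_i]$ and $t\in[\tau_i,\tau_i+b_i/\rho_i]$ for some $i$. The lifetime of a schedule is the maximum $T$ such that every $(u,t)\in[0,1]\times[0,T]$ is covered; $\mathrm{Opt}(x,b)$ is the maximum lifetime over all schedules. The \textsc{RoundRobin} algorithm sets $\rho_i=r_i=\max\{x_i,1-x_i\}$ and $\tau_i=\sum_{j=1}^{i-1}b_j/\rho_j$ for every $i$, so that the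 sensors take turns each covering all of $[0,1]$. *)

From HB Require Import structures.
From mathcomp Require Import all_boot all_order all_algebra.
From mathcomp Require Import all_classical all_reals.
Set Implicit Arguments. Unset Strict Implicit. Unset Printing Implicit Defensive.
Import Order.TTheory GRing.Theory Num.Theory.
Local Open Scope ring_scope.
Local Open Scope classical_set_scope.

Section SetOnceStripCover.
Variable R : realType.
Variable n : nat.

Definition instance (x : 'I_n -> R) (b : 'I_n -> rat) : Prop :=
  (forall i, 0 <= x i <= 1) /\
  (forall i j : 'I_n, (i <= j)%N -> x i <= x j) /\
  (forall i, 0 <= b i).

Definition schedule (rho tau : 'I_n -> R) : Prop :=
  (forall i, 0 <= rho i <= 1) /\ (forall i, 0 <= tau i).

Definition covers (x : 'I_n -> R) (b : 'I_n -> rat) (rho tau : 'I_n -> R)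
    (i : 'I_n) (u t : R) : Prop :=
  0 < rho i /\ x i - rho i <= u <= x i + rho i /\
  tau i <= t <= tau i + ratr (b i) / rho i.

Definition covered x b rho tau (u t : R) : Prop :=
  exists i, covers x b rho tau i u t.

Definition covers_upto x b rho tau (T : R) : Prop :=
  forall u t, 0 <= u <= 1 -> 0 <= t <= T -> covered x b rho tau u t.

(* lifetime = maximum T >= 0 with [0,1]x[0,T] covered (as a supremum;
   the set is nonempty-or-empty, bounded, and closed, so this is the max
   when it exists, and 0 when nothing is covered) *)
Definition lifetime x b rho tau : R :=
  sup [set T : R | 0 <= T /\ covers_upto x b rho tau T].

Definition Opt x b : R :=
  sup [set L : R | exists rho tau, schedule rho tau /\ L = lifetime x b rho tau].

Definition rr (x : 'I_n -> R) (i : 'I_n) : R := Num.max (x i) (1 - x i).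

Definition rr_tau (x : 'I_n -> R) (b : 'I_n -> rat) (i : 'I_n) : R :=
  \sum_(j < n | (j < i)%N) ratr (b j) / rr x j.

Definition RR (x : 'I_n -> R) (b : 'I_n -> rat) : R :=
  \sum_(i < n) ratr (b i) / rr x i.

End SetOnceStripCover.

From HB Require Import structures.
From mathcomp Require Import all_boot all_order all_algebra.
From mathcomp Require Import all_classical all_reals.
From mathcomp Require Import zify ring lra.
Set Implicit Arguments. Unset Strict Implicit. Unset Printing Implicit Defensive.
Import Order.TTheory GRing.Theory Num.Theory.
Local Open Scope ring_scope.

(* Both halves of the approximation bound are instances of one covering
   inequality: if weighted intervals cover every point of [lo, hi] with total
   weight at least 1, then for every nondecreasing G the weighted G-lengths of
   the intervals (clipped to [lo, hi]) add up to at least G hi - G lo.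

   In space we take G = phi, where phi s = s / (2 - s) on [0, 1/2] and
   phi (1 - s) = 2/3 - phi s; a sensor at x with radius rho has phi-length at
   most rho / max(x, 1 - x).  Hence at every covered time of any schedule the
   active sensors satisfy sum rho_i / r_i >= phi 1 - phi 0 = 2/3.  In time we
   take G = id and weights 3/2 rho_i / r_i: the active period of sensor i has
   length b_i / rho_i, so any covered horizon T is at most
   sum 3/2 b_i / r_i = 3/2 RR.  RoundRobin itself covers [0, 1] in consecutive
   time slots of lengths b_i / r_i, so its lifetime is exactly RR. *)

Section WeightedCover.
Variables (R : realFieldType) (G : R -> R).
Hypothesis G_homo : {homo G : s t / s <= t}.
Variables (I : finType) (a b w : I -> R).
Hypothesis w_ge0 : forall i, 0 <= w i.

Definition weight_covers (lo hi : R) : Prop :=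
  forall t, lo <= t <= hi -> 1 <= \sum_(i | a i <= t <= b i) w i.

Definition overlap (lo hi : R) (i : I) : R :=
  Num.max (G (Num.min (b i) hi) - G (Num.max (a i) lo)) 0.

Definition weighted_overlap (lo hi : R) : R := \sum_i w i * overlap lo hi i.

Lemma overlap_ge0 lo hi i : 0 <= overlap lo hi i.
Proof. by rewrite /overlap le_max lexx orbT. Qed.

Lemma weighted_overlap_ge0 lo hi : 0 <= weighted_overlap lo hi.
Proof. by apply: sumr_ge0 => i _; rewrite mulr_ge0 ?overlap_ge0. Qed.

Lemma overlap_split i {lo p hi} : lo <= p -> p <= hi ->
  overlap lo hi i = overlap lo p i + overlap p hi i.
Proof.
move=> lo_p p_hi; rewrite /overlap.
have [p_a|a_p] := lerP p (a i).
  have G_b_a : G (Num.min (b i) p) <= G (a i) by rewrite G_homo // ge_min p_a orbT.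
  rewrite (@max_l _ _ (a i) lo); last by lra.
  by rewrite [Num.max (G (Num.min (b i) p) - _) 0]max_r ?add0r //; lra.
have [b_p|p_b] := lerP (b i) p.
  have G_b_p : G (b i) <= G p by rewrite G_homo.
  rewrite (@min_l _ _ (b i) hi); last by lra.
  by rewrite [Num.max (_ - G p) 0]max_r ?addr0 //; lra.
set A := Num.max (a i) lo; set B := Num.min (b i) hi.
have A_p : A <= p by rewrite ge_max; apply/andP; split; lra.
have p_B : p <= B by rewrite le_min; apply/andP; split; lra.
by rewrite !max_l ?subr_ge0 ?G_homo ?(le_trans A_p p_B) //; lra.
Qed.

Lemma weighted_overlap_split {lo p hi} : lo <= p -> p <= hi ->
  weighted_overlap lo hi = weighted_overlap lo p + weighted_overlap p hi.
Proof.
move=> lo_p p_hi; rewrite /weighted_overlap -big_split; apply: eq_bigr => i _.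
by rewrite (overlap_split i lo_p p_hi) mulrDr.
Qed.

Lemma weight_covers_sub {lo hi lo' hi'} : lo <= lo' -> hi' <= hi ->
  weight_covers lo hi -> weight_covers lo' hi'.
Proof. by move=> lo_lo' hi'_hi cov t /andP[? ?]; apply: cov; apply/andP; split; lra. Qed.

(* Without interval endpoints strictly inside [lo, hi], every interval that
   contains the midpoint contains all of [lo, hi]. *)
Lemma weighted_overlap_ge_no_endpoint lo hi : lo <= hi -> weight_covers lo hi ->
  (forall i, ~~ (lo < a i < hi) && ~~ (lo < b i < hi)) ->
  G hi - G lo <= weighted_overlap lo hi.
Proof.
move=> lo_hi cov no_end.
have [hi_lo|lo_lt_hi] := lerP hi lo.
  have -> : hi = lo by lra.
  by rewrite subrr weighted_overlap_ge0.
pose t := (lo + hi) / 2.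
have /cov cov_t : lo <= t <= hi by apply/andP; split; rewrite /t; lra.
have G_ge0 : 0 <= G hi - G lo by rewrite subr_ge0 G_homo // ltW.
rewrite /weighted_overlap (bigID (fun i => a i <= t <= b i)) /=.
have -> : \sum_(i | a i <= t <= b i) w i * overlap lo hi i =
          \sum_(i | a i <= t <= b i) w i * (G hi - G lo).
  apply: eq_bigr => i /andP[a_t t_b].
  have := no_end i; rewrite !negb_and -!leNgt => /andP[a_out b_out].
  rewrite /overlap min_r; last by case/orP: b_out; rewrite /t in t_b; lra.
  rewrite (@max_r _ _ (a i) lo) ?max_l //.
  by case/orP: a_out; rewrite /t in a_t; lra.
rewrite -mulr_suml; have := ler_wpM2r G_ge0 cov_t; rewrite mul1r.
have : 0 <= \sum_(i | ~~ (a i <= t <= b i)) w i * overlap lo hi i.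
  by apply: sumr_ge0 => i _; rewrite mulr_ge0 ?overlap_ge0.
lra.
Qed.

Definition inside (f : I -> R) (lo hi : R) : {set I} := [set i | lo < f i < hi].

Definition endpoints_inside (lo hi : R) : nat :=
  #|inside a lo hi| + #|inside b lo hi|.

Lemma inside_sub f lo hi lo' hi' : lo <= lo' -> hi' <= hi ->
  inside f lo' hi' \subset inside f lo hi.
Proof.
move=> lo_lo' hi'_hi; apply/fintype.subsetP => i; rewrite !inE => /andP[? ?].
by apply/andP; split; lra.
Qed.

Lemma endpoints_inside_lt {lo hi lo' hi' p j} : lo <= lo' -> hi' <= hi ->
  lo < p < hi -> ~~ (lo' < p < hi') -> a j = p \/ b j = p ->
  (endpoints_inside lo' hi' < endpoints_inside lo hi)%N.
Proof.
move=> lo_lo' hi'_hi p_in p_out a_b_j.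
have sub f : inside f lo' hi' \subset inside f lo hi by exact: inside_sub.
have proper f : f j = p -> inside f lo' hi' \proper inside f lo hi.
  by move=> fj; apply/properP; split => //; exists j; rewrite !inE fj.
rewrite /endpoints_inside; case: a_b_j => /proper/proper_card lt.
- by rewrite -addSn leq_add // subset_leq_card.
- by rewrite -addnS leq_add // subset_leq_card.
Qed.

Lemma weighted_overlap_ge lo hi : lo <= hi -> weight_covers lo hi ->
  G hi - G lo <= weighted_overlap lo hi.
Proof.
have [k] := ubnP (endpoints_inside lo hi).
elim: k lo hi => // k IH lo hi lt_k lo_hi cov.
case: (pickP (fun i => (lo < a i < hi) || (lo < b i < hi))) => [j end_j|no_end];
  last first.
  apply: weighted_overlap_ge_no_endpoint => // i.
  by have := no_end i; rewrite /= => /negbT; rewrite negb_or.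
have [p [/andP[lo_p p_hi] a_b_j]] : exists p, lo < p < hi /\ (a j = p \/ b j = p).
  by case/orP: end_j => p_in; [exists (a j) | exists (b j)]; split; auto.
have p_in : lo < p < hi by rewrite lo_p p_hi.
have p_out_left : ~~ (lo < p < p) by rewrite ltxx andbF.
have p_out_right : ~~ (p < p < hi) by rewrite ltxx.
have lt_lo_p := endpoints_inside_lt (lexx lo) (ltW p_hi) p_in p_out_left a_b_j.
have lt_p_hi := endpoints_inside_lt (ltW lo_p) (lexx hi) p_in p_out_right a_b_j.
rewrite (weighted_overlap_split (ltW lo_p) (ltW p_hi)).
have := IH lo p ltac:(lia) (ltW lo_p) (weight_covers_sub (lexx lo) (ltW p_hi) cov).
have := IH p hi ltac:(lia) (ltW p_hi) (weight_covers_sub (ltW lo_p) (lexx hi) cov).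
lra.
Qed.

End WeightedCover.

Section Potential.
Variable R : realFieldType.

Ltac nonzero := repeat (apply/andP; split); try done; apply/negP => /eqP ?; lra.

(* phi s = s / (2 - s) is the charge rho / r of the sensor covering exactly
   [0, s] (x = rho = s / 2), so [phi_sub_le] is tight for a = 0. *)
Definition phi (s : R) : R :=
  if s <= 2^-1 then s / (2 - s) else 2/3 - (1 - s) / (1 + s).

Lemma phi_small {s} : s <= 2^-1 -> phi s = s / (2 - s).
Proof. by move=> s_small; rewrite /phi s_small. Qed.

Lemma phi_large {s} : 2^-1 < s -> phi s = 2/3 - (1 - s) / (1 + s).
Proof. by move=> s_large; rewrite /phi leNgt s_large. Qed.

Lemma phi0 : phi 0 = 0.
Proof. by rewrite phi_small ?mul0r //; lra. Qed.

Lemma phi1 : phi 1 = 2/3.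
Proof. by rewrite phi_large ?subrr ?mul0r ?subr0 //; lra. Qed.

Lemma phi_compl (s : R) : phi (1 - s) = 2/3 - phi s.
Proof.
rewrite /phi; case: (lerP (1 - s) (2^-1)) => h1; case: (lerP s (2^-1)) => h2.
- have -> : s = 2^-1 by lra.
  by field.
- by field; nonzero.
- by field; nonzero.
- lra.
Qed.

Lemma phi_homo : {homo phi : s t / s <= t}.
Proof.
move=> s t s_t; rewrite -subr_ge0.
have [t_small|t_large] := lerP t (2^-1).
  have s_small : s <= 2^-1 by lra.
  rewrite (phi_small s_small) (phi_small t_small).
  have -> : t / (2 - t) - s / (2 - s) = 2 * (t - s) / ((2 - t) * (2 - s)).
    by field; nonzero.
  by apply: divr_ge0; nra.
rewrite (phi_large t_large); have [s_small|s_large] := lerP s (2^-1).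
  rewrite (phi_small s_small).
  have -> : 2 / 3 - (1 - t) / (1 + t) - s / (2 - s) =
      ((4 * t - 2) * (2 - s) + (2 - 4 * s) * (1 + t)) / (3 * (1 + t) * (2 - s)).
    by field; nonzero.
  by apply: divr_ge0; nra.
rewrite (phi_large s_large).
have -> : 2 / 3 - (1 - t) / (1 + t) - (2 / 3 - (1 - s) / (1 + s)) =
    2 * (t - s) / ((1 + t) * (1 + s)).
  by field; nonzero.
by apply: divr_ge0; nra.
Qed.

Lemma phi_sub_le (a b : R) : 0 <= a <= b -> a + b <= 1 ->
  phi b - phi a <= (b - a) / (2 - a - b).
Proof.
move=> /andP[a_ge0 a_b] ab_le1; rewrite -subr_ge0 (phi_small (_ : a <= 2^-1)); last by lra.
have [b_small|b_large] := lerP b (2^-1).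
  rewrite (phi_small b_small).
  have -> : (b - a) / (2 - a - b) - (b / (2 - b) - a / (2 - a)) =
      a * b * (b - a) / ((2 - a - b) * (2 - b) * (2 - a)) by field; nonzero.
  by apply: divr_ge0; rewrite ?mulr_ge0 //; lra.
rewrite (phi_large b_large).
have -> : (b - a) / (2 - a - b) - (2/3 - (1 - b) / (1 + b) - a / (2 - a)) =
    (4 * (1 - 2 * b) ^+ 2 + 3 * a * (2 * b - 1) * (1 - b) + a * (1 - b - a) * (5 * b - 1))
    / (3 * (2 - a - b) * (1 + b) * (2 - a)) by field; nonzero.
apply: divr_ge0; last by rewrite !mulr_ge0 //; lra.
have : 0 <= 3 * a * (2 * b - 1) * (1 - b) by rewrite !mulr_ge0 //; lra.
have : 0 <= a * (1 - b - a) * (5 * b - 1) by rewrite !mulr_ge0 //; lra.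
have := sqr_ge0 (1 - 2 * b); lra.
Qed.

(* Clipping to [0, 1] only helps: for a < 0 the charge (b - a) / (2 - a - b)
   decreases in a, and past b = 1 it stays above phi 1 = 2/3. *)
Lemma phi_clip_sub_le (a b : R) : a <= b -> 0 <= a + b <= 1 ->
  phi (Num.min b 1) - phi (Num.max a 0) <= (b - a) / (2 - a - b).
Proof.
move=> a_b /andP[ab_ge0 ab_le1].
have [a_ge0|a_lt0] := lerP 0 a.
  rewrite min_l ?max_l; try lra.
  by apply: phi_sub_le => //; apply/andP.
rewrite phi0 subr0.
have [b_le1|b_gt1] := lerP b 1.
  have b_in : 0 <= (0 : R) <= b by apply/andP; split; lra.
  have := @phi_sub_le 0 b b_in; rewrite phi0 !subr0 add0r => /(_ b_le1) phi_b.
  apply: le_trans phi_b _; rewrite ler_pdivlMr; last by lra.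
  rewrite mulrAC ler_pdivrMr; last by lra.
  nra.
rewrite phi1 ler_pdivlMr; last by lra.
lra.
Qed.

Lemma phi_window_le_small {x rho : R} : 0 <= x <= 2^-1 -> 0 <= rho ->
  phi (Num.min (x + rho) 1) - phi (Num.max (x - rho) 0) <= rho / (1 - x).
Proof.
move=> /andP[x_ge0 x_small] rho_ge0.
have -> : rho / (1 - x) = ((x + rho) - (x - rho)) / (2 - (x - rho) - (x + rho)).
  by field; nonzero.
by apply: phi_clip_sub_le; [lra | apply/andP; split; lra].
Qed.

Lemma phi_window_le (x rho : R) : 0 <= x <= 1 -> 0 <= rho ->
  phi (Num.min (x + rho) 1) - phi (Num.max (x - rho) 0) <= rho / Num.max x (1 - x).
Proof.
move=> /andP[x_ge0 x_le1] rho_ge0; have [x_small|x_large] := lerP x (2^-1).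
  rewrite [Num.max x _]max_r; last by lra.
  by apply: phi_window_le_small => //; apply/andP.
rewrite [Num.max x _]max_l; last by lra.
have -> : Num.min (x + rho) 1 = 1 - Num.max ((1 - x) - rho) 0.
  by case: (lerP (x + rho) 1) => ?; case: (lerP 0 (1 - x - rho)) => ?; lra.
have -> : Num.max (x - rho) 0 = 1 - Num.min ((1 - x) + rho) 1.
  by case: (lerP 0 (x - rho)) => ?; case: (lerP (1 - x + rho) 1) => ?; lra.
rewrite !phi_compl.
have x'_small : 0 <= 1 - x <= 2^-1 by apply/andP; split; lra.
have := phi_window_le_small x'_small rho_ge0.
have -> : 1 - (1 - x) = x by ring.
lra.
Qed.

End Potential.

Section PrefixSums.
Variables (R : realDomainType) (n : nat) (f : 'I_n -> R).

Definition prefix_sum (i : 'I_n) : R := \sum_(j < n | (j < i)%N) f j.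

Lemma prefix_sum0 (i : 'I_n) : i = 0%N :> nat -> prefix_sum i = 0.
Proof. by move=> i0; rewrite /prefix_sum big_pred0 // => j; rewrite i0. Qed.

Lemma prefix_sumS (i : 'I_n) (Si : (i.+1 < n)%N) :
  prefix_sum (Ordinal Si) = prefix_sum i + f i.
Proof.
rewrite /prefix_sum (bigD1 i) /= ?ltnSn // addrC; congr (_ + _).
by apply: eq_bigl => j; rewrite ltnS andbC ltn_neqAle val_eqE.
Qed.

Lemma sum_prefix_last (last_n : (n.-1 < n)%N) :
  \sum_j f j = prefix_sum (Ordinal last_n) + f (Ordinal last_n).
Proof.
rewrite (bigD1 (Ordinal last_n)) //= addrC; congr (_ + _).
apply: eq_bigl => j; rewrite ltn_neqAle val_eqE /=.
by rewrite -ltnS (ltn_predK (ltn_ord j)) ltn_ord andbT.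
Qed.

Lemma prefix_sum_le (i : 'I_n) : (forall j, 0 <= f j) ->
  prefix_sum i + f i <= \sum_j f j.
Proof.
move=> f_ge0; rewrite (bigID (fun j : 'I_n => (j < i)%N)) /= lerD2l.
by rewrite (bigD1 i) /= ?ltnn // lerDl sumr_ge0.
Qed.

(* If t fell into no slot, induction would push t beyond every prefix sum,
   hence beyond the total. *)
Lemma prefix_sum_slot t : (0 < n)%N -> 0 <= t <= \sum_j f j ->
  exists i, prefix_sum i <= t <= prefix_sum i + f i.
Proof.
move=> n_gt0 /andP[t_ge0 t_le].
case: (pickP (fun i => prefix_sum i <= t <= prefix_sum i + f i)) => [i|no_slot].
  by exists i.
have beyond k (k_lt : (k < n)%N) : prefix_sum (Ordinal k_lt) <= t.
  elim: k k_lt => [|k IH] k_lt; first by rewrite prefix_sum0.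
  have k_lt' := ltnW k_lt; have := no_slot (Ordinal k_lt').
  by rewrite /= (@prefix_sumS (Ordinal k_lt') k_lt) IH //= => /negbT; rewrite -ltNge => /ltW.
have last_n : (n.-1 < n)%N by rewrite ltn_predL.
have := no_slot (Ordinal last_n); rewrite /= beyond /= -sum_prefix_last.
by rewrite t_le.
Qed.

End PrefixSums.

Lemma sup_le_nonneg (R : realType) (E : set R) (c : R) :
  0 <= c -> ubound E c -> sup E <= c.
Proof.
move=> c_ge0 E_c; have [[y Ey]|E0] := pselect (exists y, E y).
  by apply: ge_sup => //; exists y.
have -> : E = set0 by apply/seteqP; split => y // Ey; case: E0; exists y.
by rewrite sup0.
Qed.

Lemma sup_eq_max (R : realType) (E : set R) (c : R) :
  E c -> ubound E c -> sup E = c.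
Proof.
move=> Ec E_c; apply/eqP; rewrite eq_le ge_sup //=; last by exists c.
by apply: sup_upper_bound => //; split; exists c.
Qed.

Section RoundRobin.
Variables (R : realType) (n : nat).
Implicit Types (x rho tau : 'I_n -> R) (b : 'I_n -> rat).

Lemma rr_bounds {x i} : 0 <= x i <= 1 -> 2^-1 <= rr x i <= 1.
Proof.
by move=> /andP[? ?]; rewrite /rr; case: (lerP (x i) (1 - x i)) => ?; apply/andP; split; lra.
Qed.

Definition rr_charge x b i : R := ratr (b i) / rr x i.

Lemma rr_charge_ge0 x b i : instance x b -> 0 <= rr_charge x b i.
Proof.
move=> [x01 [_ b_ge0]]; have /andP[rr_ge _] := rr_bounds (x01 i).
by rewrite /rr_charge divr_ge0 ?ler0q ?b_ge0 //; lra.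
Qed.

Lemma rr_schedule x b : instance x b -> schedule (rr x) (rr_tau x b).
Proof.
move=> inst; have [x01 _] := inst; split => i.
  by have := rr_bounds (x01 i); move=> /andP[? ?]; apply/andP; split; lra.
by apply: sumr_ge0 => j _; apply: rr_charge_ge0.
Qed.

Lemma rr_covers x b : instance x b -> (0 < n)%N ->
  covers_upto x b (rr x) (rr_tau x b) (RR x b).
Proof.
move=> inst n_gt0 u t /andP[u_ge0 u_le1] t_in; have [x01 _] := inst.
(* [rr_tau x b] and [RR x b] are the prefix sums and the total of [rr_charge x b]. *)
have [i slot_i] := @prefix_sum_slot _ _ (rr_charge x b) t n_gt0 t_in; exists i.
have /andP[x_ge0 x_le1] := x01 i; have /andP[rr_ge _] := rr_bounds (x01 i).
split; first lra; split; last exact: slot_i.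
have x_le : x i <= rr x i by rewrite /rr le_max lexx.
have x'_le : 1 - x i <= rr x i by rewrite /rr le_max lexx orbT.
by apply/andP; split; lra.
Qed.

Lemma rr_lifetime x b : instance x b -> lifetime x b (rr x) (rr_tau x b) = RR x b.
Proof.
move=> inst; have zero_in : 0 <= (0 : R) <= 1 by rewrite lexx ler01.
have [n0|n_gt0] := posnP n.
  have no_sensor (i : 'I_n) : False by case: i => k; rewrite n0.
  rewrite /RR big1 => [|i]; last by case: (no_sensor i).
  rewrite /lifetime -[RHS]sup0; congr sup; apply/seteqP; split => // T [T_ge0 cov].
  have zero_T : 0 <= (0 : R) <= T by rewrite lexx T_ge0.
  by have [i _] := cov 0 0 zero_in zero_T; case: (no_sensor i).
apply: sup_eq_max => [|T [T_ge0 cov]].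
  by split; [apply: sumr_ge0 => i _; apply: rr_charge_ge0 | exact: rr_covers].
have T_T : 0 <= T <= T by rewrite lexx T_ge0.
have [i [_ [_ /andP[_ T_le]]]] := cov 0 T zero_in T_T.
by apply: le_trans T_le _; apply: prefix_sum_le => j; apply: rr_charge_ge0.
Qed.

Definition active b rho tau t i : bool :=
  (0 < rho i) && (tau i <= t <= tau i + ratr (b i) / rho i).

Lemma active_load_ge x b rho tau t : (forall i, 0 <= x i <= 1) ->
  (forall u, 0 <= u <= 1 -> covered x b rho tau u t) ->
  2/3 <= \sum_(i | active b rho tau t i) rho i / rr x i.
Proof.
move=> x01 cov; pose w i : R := (active b rho tau t i)%:R.
have w_ge0 i : 0 <= w i by rewrite ler0n.
have w_cov : weight_covers (fun i => x i - rho i) (fun i => x i + rho i) w 0 1.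
  move=> u /cov [i [rho_gt0 [u_in t_in]]]; rewrite (bigD1 i) //=.
  by rewrite /w /active rho_gt0 t_in lerDl sumr_ge0.
have := weighted_overlap_ge (@phi_homo R) w_ge0 ler01 w_cov; rewrite phi0 phi1 subr0.
move/le_trans; apply; rewrite /weighted_overlap [X in _ <= X]big_mkcond /=.
apply: ler_sum => i _; rewrite /w; case: ifP => [/andP[rho_gt0 _]|_]; last by rewrite mul0r.
have /andP[rr_ge _] := rr_bounds (x01 i).
rewrite mul1r /overlap ge_max phi_window_le ?divr_ge0 //; lra.
Qed.

Lemma covers_upto_le x b rho tau T : instance x b -> schedule rho tau -> 0 <= T ->
  covers_upto x b rho tau T -> T <= 3/2 * RR x b.
Proof.
move=> inst [rho01 tau_ge0] T_ge0 cov; have [x01 [_ b_ge0]] := inst.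
have rr_gt0 i : 0 < rr x i by have /andP[? _] := rr_bounds (x01 i); lra.
have rho_ge0 i : 0 <= rho i by have /andP[] := rho01 i.
pose e i := tau i + ratr (b i) / rho i.
pose w i := 3/2 * (rho i / rr x i).
have w_ge0 i : 0 <= w i by rewrite mulr_ge0 ?divr_ge0 ?rho_ge0 ?ltW.
have w_cov : weight_covers tau e w 0 T.
  move=> t t_in; have := active_load_ge x01 (fun u u_in => cov u t u_in t_in).
  have -> : \sum_(i | active b rho tau t i) rho i / rr x i =
            2/3 * \sum_(i | active b rho tau t i) w i.
    by rewrite mulr_sumr; apply: eq_bigr => i _; rewrite /w mulrA; field; rewrite gt_eqF.
  move=> load; apply: le_trans (_ : \sum_(i | active b rho tau t i) w i <= _); first lra.
  rewrite big_mkcond [X in _ <= X]big_mkcond /=; apply: ler_sum => i _.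
  by case: ifP => [/andP[_ ->] //|_]; case: ifP.
have := weighted_overlap_ge (G := id) (fun _ _ st => st) w_ge0 T_ge0 w_cov.
rewrite subr0 => /le_trans; apply.
rewrite /weighted_overlap /RR mulr_sumr; apply: ler_sum => i _.
have charge_ge0 : 0 <= ratr (b i) / rho i by rewrite divr_ge0 ?ler0q ?b_ge0.
have : overlap id tau e 0 T i <= ratr (b i) / rho i.
  rewrite /overlap /= ge_max charge_ge0 andbT.
  have := tau_ge0 i; have : Num.min (e i) T <= e i by rewrite ge_min lexx.
  rewrite /e; case: (lerP 0 (tau i)) => _; lra.
move=> /(ler_wpM2l (w_ge0 i)) /le_trans; apply.
have [rho0|rho_neq0] := eqVneq (rho i) 0.
  have := rr_charge_ge0 i inst; rewrite /w rho0 /rr_charge !(mul0r, mulr0); lra.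
suff -> : w i * (ratr (b i) / rho i) = 3/2 * (ratr (b i) / rr x i) by [].
by rewrite /w; field; rewrite rho_neq0 gt_eqF.
Qed.

Lemma Opt_le_RR x b : instance x b -> Opt x b <= 3/2 * RR x b.
Proof.
move=> inst; have RR_ge0 : 0 <= 3/2 * RR x b.
  by rewrite mulr_ge0 ?sumr_ge0 // => [|i _]; [lra | apply: rr_charge_ge0].
apply: sup_le_nonneg => // _ [rho [tau [sched ->]]].
apply: sup_le_nonneg => // T [T_ge0 cov].
exact: covers_upto_le cov.
Qed.

End RoundRobin.

Theorem theorem2 (R : realType) (n : nat) (x : 'I_n -> R) (b : 'I_n -> rat) :
  instance x b ->
  schedule (rr x) (rr_tau x b) /\
  lifetime x b (rr x) (rr_tau x b) = RR x b /\
  RR x b >= 2 / 3 * Opt x b.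
Proof.
move=> inst; split; [exact: rr_schedule | split; first exact: rr_lifetime].
have := Opt_le_RR inst; lra.
Qed.
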